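(* Let $G$ be a looped simple graph and let $J$ be an independent set of some transverse matroid of $G$ (i.e. $J$ is a subtransversal of $W(G)$ independent in $M[IAS(G)]$). Then there is a looped simple graph $H$ locally equivalent to $G$ and an induced isomorphism $\beta:M[IAS(G)]\to M[IAS(H)]$ such that $\beta(J)\subseteq\Phi(H)=\{\phi_H(v):v\in V(H)\}$.
   Context: A looped simple graph is a finite graph in which each vertex carries at most one loop and no two distinct vertices are joined by more than one edge. ''Adjacent''/''neighbors'' refer only to distinct vertices joined by a non-loop edge; $N_G(v)$ is the set of neighbors of $v$. $A(G)$ is the $V(G)\times V(G)$ matrix over $GF(2)$ with diagonal entry $1$ exactly at looped vertices and off-diagonal entry $1$ exactly for adjacent pairs. $IAS(G)=(I\mid A(G)\mid A(G)+I)$ over $GF(2)$, rows indexed by $V(G)$; the $v$-columns of the three blocks are labelled $\phi_G(v),\chi_G(v),\psi_G(v)$. $M[IAS(G)]$ is the binary column matroid of $IAS(G)$ on $W(G)=\{\phi_G(v),\chi_G(v),\psi_G(v):v\in V(G)\}$. The vertex triple of $v$ is $\tau_G(v)=\{\phi_G(v),\chi_G(v),\psi_G(v)\}$. A subtransversal (transversal) meets each vertex triple in at most (exactly) one element; a transverse matroid of $G$ is the restriction of $M[IAS(G)]$ to a transversal. Local equivalence: $G_\ell^v$ complements the loop status of $v$; $G_s^v$ complements the adjacency status of every pair of distinct neighbors of $v$; $G_{ns}^v$ does this and also complements the loop status of every neighbor of $v$. $H$ is locally equivalent to $G$ if obtained from $G$ by a finite sequence of such operations. Induced isomorphisms: for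 each such operation producing $G'$ from $G$ there is a matroid isomorphism $M[IAS(G)]\to M[IAS(G')]$ sending $\alpha_G(x)\mapsto\alpha_{G'}(x)$ for all $\alpha\in\{\phi,\chi,\psi\}$, $x\in V(G)$, except: for $G'=G_\ell^v$, $\chi_G(v)\mapsto\psi_{G'}(v)$, $\psi_G(v)\mapsto\chi_{G'}(v)$; for $G'=G_{ns}^v$ with $v$ unlooped, $\phi_G(v)\mapsto\psi_{G'}(v)$, $\psi_G(v)\mapsto\phi_{G'}(v)$, and with $v$ looped, $\phi_G(v)\mapsto\chi_{G'}(v)$, $\chi_G(v)\mapsto\phi_{G'}(v)$; for $G'=G_s^v$, the same exchange at $v$ as for $G_{ns}^v$ and in addition, for every $w\in N_G(v)$, $\chi_G(w)\mapsto\psi_{G'}(w)$, $\psi_G(w)\mapsto\chi_{G'}(w)$. An induced isomorphism $M[IAS(G)]\to M[IAS(H)]$ is a composition of such isomorphisms along a sequence of operations transforming $G$ into $H$. *)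

From HB Require Import structures.
From mathcomp Require Import all_boot all_order all_algebra.
Set Implicit Arguments. Unset Strict Implicit. Unset Printing Implicit Defensive.
Import GRing.Theory.
Local Open Scope ring_scope.

Record lgraph (V : finType) := LGraph {
  ladj : V -> V -> bool;
  lloop : V -> bool;
  ladj_sym : forall x y, ladj x y = ladj y x;
  ladj_irr : forall x, ladj x x = false }.

Inductive kind := Phi | Chi | Psi.

Definition kind_to (k : kind) : 'I_3 :=
  match k with Phi => inord 0 | Chi => inord 1 | Psi => inord 2 end.
Definition kind_of (i : 'I_3) : kind :=
  match val i with 0%N => Phi | 1%N => Chi | _ => Psi end.
Lemma kind_toK : cancel kind_to kind_of.
Proof. by case; rewrite /kind_of /= inordK. Qed.
HB.instance Definition _ := Finite.copy kind (can_type kind_toK).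

(* W(G) : element (v, k) stands for k_G(v), e.g. (v, Phi) = phi_G(v). *)
Definition elt (V : finType) := (V * kind)%type.

Definition amat (V : finType) (G : lgraph V) (y x : V) : 'F_2 :=
  (if y == x then lloop G x else ladj G y x)%:R.

(* The column of IAS(G) labelled by w, as a function of the row index y. *)
Definition ias_col (V : finType) (G : lgraph V) (w : elt V) (y : V) : 'F_2 :=
  match w.2 with
  | Phi => (y == w.1)%:R
  | Chi => amat G y w.1
  | Psi => amat G y w.1 + (y == w.1)%:R
  end.

Definition ias_indep (V : finType) (G : lgraph V) (J : {set elt V}) : Prop :=
  forall c : elt V -> 'F_2,
    (forall y, \sum_(w in J) c w * ias_col G w y = 0) ->
    forall w, w \in J -> c w = 0.

Definition subtransversal (V : finType) (J : {set elt V}) : Prop :=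
  forall v : V, (#|[set w in J | w.1 == v]| <= 1)%N.

Inductive lop (V : Type) := Lop_l of V | Lop_s of V | Lop_ns of V.

Definition s_adj (V : finType) (G : lgraph V) (v : V) (x y : V) : bool :=
  ladj G x y (+) [&& x != y, ladj G v x & ladj G v y].

Lemma s_adj_sym (V : finType) (G : lgraph V) v x y : s_adj G v x y = s_adj G v y x.
Proof. by rewrite /s_adj (ladj_sym G x y) eq_sym (andbC (ladj G v x)). Qed.
Lemma s_adj_irr (V : finType) (G : lgraph V) v x : s_adj G v x x = false.
Proof. by rewrite /s_adj ladj_irr eqxx. Qed.
Lemma ladj_sym' (V : finType) (G : lgraph V) x y : ladj G x y = ladj G y x.
Proof. exact: ladj_sym. Qed.
Lemma ladj_irr' (V : finType) (G : lgraph V) x : ladj G x x = false.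
Proof. exact: ladj_irr. Qed.

Definition graph_l (V : finType) (G : lgraph V) (v : V) : lgraph V :=
  @LGraph V (ladj G) (fun x => if x == v then ~~ lloop G x else lloop G x)
    (ladj_sym' G) (ladj_irr' G).
Definition graph_s (V : finType) (G : lgraph V) (v : V) : lgraph V :=
  @LGraph V (s_adj G v) (lloop G) (s_adj_sym G v) (s_adj_irr G v).
Definition graph_ns (V : finType) (G : lgraph V) (v : V) : lgraph V :=
  @LGraph V (s_adj G v) (fun x => lloop G x (+) ladj G v x)
    (s_adj_sym G v) (s_adj_irr G v).

Definition apply_lop (V : finType) (o : lop V) (G : lgraph V) : lgraph V :=
  match o with
  | Lop_l v => graph_l G v
  | Lop_s v => graph_s G v
  | Lop_ns v => graph_ns G v
  end.

Fixpoint apply_lops (V : finType) (G : lgraph V) (s : seq (lop V)) : lgraph V :=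
  match s with
  | [::] => G
  | o :: s' => apply_lops (apply_lop o G) s'
  end.

Definition swap_kind (a b : kind) (k : kind) : kind :=
  if k == a then b else if k == b then a else k.

(* The isomorphism M[IAS(G)] -> M[IAS(G')] induced by one operation. *)
Definition lop_map (V : finType) (G : lgraph V) (o : lop V) (w : elt V) : elt V :=
  let: (x, k) := w in
  match o with
  | Lop_l v => (x, if x == v then swap_kind Chi Psi k else k)
  | Lop_ns v =>
      (x, if x == v then
            (if lloop G v then swap_kind Phi Chi k else swap_kind Phi Psi k)
          else k)
  | Lop_s v =>
      (x, if x == v then
            (if lloop G v then swap_kind Phi Chi k else swap_kind Phi Psi k)
          else if ladj G v x then swap_kind Chi Psi k else k)
  end.

Fixpoint induced_map (V : finType) (G : lgraph V) (s : seq (lop V)) : elt V -> elt V :=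
  match s with
  | [::] => id
  | o :: s' => fun w => induced_map (apply_lop o G) s' (lop_map G o w)
  end.

From HB Require Import structures.
From mathcomp Require Import all_boot all_order all_algebra.
Import GRing.Theory.
Set Implicit Arguments. Unset Strict Implicit. Unset Printing Implicit Defensive.
Local Open Scope ring_scope.

(* Induction on the number of elements of J outside Phi.  Each local operation
   acts on the columns of IAS(G), transported along its induced isomorphism, by
   an invertible row operation, so independence and the subtransversal property
   are preserved.  Take (v, k) in J with k <> Phi.  If k is the element that
   G_ns^v exchanges with phi(v) (chi(v) for looped v, psi(v) otherwise), apply
   G_ns^v.  If not, the column of (v, k) is the indicator of N(v); as the phi
   columns are unit vectors, independence yields a neighbour u of v with
   phi(u) not in J, and G_ns^u toggles the loop of v, after which G_ns^v
   applies.  Neither operation moves the elements of J already in Phi. *)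

Definition eqkind (a b : kind) : bool :=
  match a, b with Phi, Phi | Chi, Chi | Psi, Psi => true | _, _ => false end.

Lemma eq_kindE (a b : kind) : (a == b) = eqkind a b.
Proof.
case: a; case: b => //=; rewrite ?eqxx //.
all: by apply/eqP => /(f_equal kind_to)/(f_equal val); rewrite /= !inordK.
Qed.

Lemma swap_kindK (a b : kind) : involutive (swap_kind a b).
Proof. by case: a; case: b; case; rewrite /swap_kind !eq_kindE. Qed.

Lemma F2_natr_addb (a b : bool) : (a%:R + b%:R : 'F_2) = (a (+) b)%:R.
Proof. by case: a; case: b; apply/val_inj. Qed.

Lemma F2_natr_andb (a b : bool) : (a%:R * b%:R : 'F_2) = (a && b)%:R.
Proof. by case: a; case: b; apply/val_inj. Qed.

Section LocalEquivalence.

Variable V : finType.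
Implicit Types (G : lgraph V) (J : {set elt V}) (o : lop V) (s : seq (lop V)).

Definition adjb G (y x : V) : bool := if y == x then lloop G x else ladj G y x.

Definition colb G (w : elt V) (y : V) : bool :=
  match w.2 with
  | Phi => y == w.1
  | Chi => adjb G y w.1
  | Psi => adjb G y w.1 (+) (y == w.1)
  end.

Lemma ias_colE G w y : ias_col G w y = (colb G w y)%:R.
Proof. by rewrite /ias_col /colb /amat; case: w.2; rewrite ?F2_natr_addb. Qed.

Lemma lop_map_fst G o w : (lop_map G o w).1 = w.1.
Proof. by case: w => x k; case: o. Qed.

Lemma lop_map_inj G o : injective (lop_map G o).
Proof.
move=> [x k] [x' k']; case: o => v /= [<-]; repeat case: ifP => _;
  by [move=> -> | move/(can_inj (swap_kindK _ _)) ->].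
Qed.

Lemma induced_map_fst G s w : (induced_map G s w).1 = w.1.
Proof. by elim: s G w => //= o s IH G w; rewrite IH lop_map_fst. Qed.

Lemma induced_map1 G o w : induced_map G [:: o] w = lop_map G o w.
Proof. by []. Qed.

Lemma induced_map_cons G o s w :
  induced_map G (o :: s) w = induced_map (apply_lop o G) s (lop_map G o w).
Proof. by []. Qed.

Lemma induced_map_cat G s1 s2 w :
  induced_map G (s1 ++ s2) w =
  induced_map (apply_lops G s1) s2 (induced_map G s1 w).
Proof. by elim: s1 G w => //= o s1 IH G w; apply: IH. Qed.

Ltac case_atoms :=
  repeat match goal with
  | H : is_true (?a != ?b) |- context [?b == ?a] => rewrite (eq_sym b a) (negbTE H)
  | H : is_true (?a != ?b) |- context [?a == ?b] => rewrite (negbTE H)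
  | |- context [?a == ?a] => rewrite eqxx
  | |- context [?a == ?b] => case: (eqVneq a b) => [?|?]; subst
  end;
  rewrite ?ladj_irr';
  repeat match goal with
  | |- context [ladj ?G ?a ?b] =>
      let E := fresh in case E: (ladj G a b); rewrite ?(ladj_sym' G b a) ?E
  | |- context [lloop ?G ?a] => case: (lloop G a)
  end.

(* A row operation adding row v to the rows in a; it is invertible as a v = false. *)
Lemma colb_lop_map G o : exists v (a : pred V), ~~ a v /\
  forall w y,
    colb (apply_lop o G) (lop_map G o w) y = colb G w y (+) (colb G w v && a y).
Proof.
case: o => v; exists v; [(exists pred0) | (exists (ladj G v)) | (exists (ladj G v))];
  (split; [by rewrite /= ?ladj_irr' |]) => -[x k] y;
  rewrite /colb /adjb /= ?andbF ?addbF /s_adj;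
  by case: k; rewrite /swap_kind !eq_kindE /=; case_atoms.
Qed.

Lemma ias_indep_lop_map G o J :
  ias_indep G J -> ias_indep (apply_lop o G) (lop_map G o @: J).
Proof.
move=> indJ c sum0 _ /imsetP[w wJ ->].
have [v [a [av colE]]] := colb_lop_map G o.
pose S y := \sum_(u in J) c (lop_map G o u) * ias_col G u y.
have S_row y : S y + S v * (a y)%:R = 0.
  rewrite -(sum0 y) big_imset /=; last by move=> ? ? _ _; apply: lop_map_inj.
  rewrite /S mulr_suml -big_split /=; apply: eq_bigr => u _.
  by rewrite !ias_colE colE -F2_natr_addb -F2_natr_andb mulrDr mulrA.
have Sv : S v = 0 by have := S_row v; rewrite (negbTE av) mulr0 addr0.
have S0 y : S y = 0 by have := S_row y; rewrite Sv mul0r addr0.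
exact: (indJ (c \o lop_map G o) S0 w wJ).
Qed.

Lemma ias_indep_induced_map G s J :
  ias_indep G J -> ias_indep (apply_lops G s) (induced_map G s @: J).
Proof.
elim: s G J => [|o s IH] G J indJ /=; first by rewrite imset_id.
have := IH _ _ (ias_indep_lop_map (o := o) indJ).
by rewrite -(imset_comp (induced_map _ s) (lop_map G o)).
Qed.

Lemma subtransversal_eq J : subtransversal J ->
  {in J &, forall w1 w2, w1.1 = w2.1 -> w1 = w2}.
Proof.
move=> stJ w1 w2 w1J w2J e; apply/eqP; apply: contraLR (stJ w1.1) => ne.
have sub : [set w1; w2] \subset [set w in J | w.1 == w1.1].
  by apply/subsetP => z; rewrite !inE => /orP[]/eqP->; rewrite ?w1J ?w2J ?e eqxx.
by rewrite -ltnNge; move: (subset_leq_card sub); rewrite cards2 ne.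
Qed.

Lemma subtransversal_induced_map G s J :
  subtransversal J -> subtransversal (induced_map G s @: J).
Proof.
move=> stJ v; apply: leq_trans (stJ v).
apply: leq_trans (leq_imset_card (induced_map G s) _); apply: subset_leq_card.
apply/subsetP => z; rewrite inE => /andP[/imsetP[w wJ ->]].
by rewrite induced_map_fst => wv; apply: imset_f; rewrite inE wJ.
Qed.

Definition non_phi J := [set w in J | w.2 != Phi].

Lemma non_phi_eq0 J : non_phi J = set0 -> forall w, w \in J -> w.2 = Phi.
Proof.
move=> J_phi w wJ; apply/eqP/negPn/negP => wP.
by have := in_set0 w; rewrite -J_phi inE wJ wP.
Qed.

Lemma card_non_phi_induced_map G s J w0 :
  w0 \in non_phi J -> (induced_map G s w0).2 = Phi ->
  (forall w, w \in J -> w.2 = Phi -> (induced_map G s w).2 = Phi) ->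
  (#|non_phi (induced_map G s @: J)| < #|non_phi J|)%N.
Proof.
rewrite inE => /andP[w0J w0P] w0toP phiJ.
pose moved := [set w in J | (induced_map G s w).2 != Phi].
apply: (leq_ltn_trans (leq_trans _ (leq_imset_card (induced_map G s) moved))).
- apply: subset_leq_card; apply/subsetP => z.
  by rewrite inE => /andP[/imsetP[w wJ ->] wP]; apply: imset_f; rewrite inE wJ.
- apply: proper_card; apply/properP; split.
    apply/subsetP => w; rewrite !inE => /andP[wJ]; rewrite wJ.
    by apply: contra => /eqP wP; apply/eqP; apply: phiJ.
  by exists w0; rewrite !inE ?w0J ?w0P // w0toP eqxx andbF.
Qed.

Definition ns_partner G (v : V) : kind := if lloop G v then Chi else Psi.

Lemma lop_map_ns_partner G v : lop_map G (Lop_ns v) (v, ns_partner G v) = (v, Phi).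
Proof.
by rewrite /= eqxx /ns_partner /swap_kind; case: (lloop G v); rewrite !eq_kindE.
Qed.

Lemma lop_map_ns_other G v x k : x != v -> lop_map G (Lop_ns v) (x, k) = (x, k).
Proof. by move=> /negbTE /= ->. Qed.

Lemma colb_non_partner G v k : k != Phi -> k != ns_partner G v ->
  colb G (v, k) =1 ladj G v.
Proof.
rewrite /ns_partner /colb /adjb => kP kp y /=.
case: (eqVneq y v) => [->|yv]; [rewrite ladj_irr' | rewrite ladj_sym'];
by move: kP kp; case: k; case: (lloop G v); rewrite !eq_kindE ?addbF.
Qed.

Lemma ns_partner_graph_ns G u v k :
  ladj G u v -> k != Phi -> k != ns_partner G v -> k = ns_partner (graph_ns G u) v.
Proof.
rewrite /ns_partner /= => -> kP; rewrite addbT.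
by case: (lloop G v); case: k kP; rewrite !eq_kindE.
Qed.

(* Otherwise the column of (v, k), the indicator of N(v), would be the sum of
   the phi columns of J at the neighbours of v. *)
Lemma exists_neighbor_phi_free G J v k :
  ias_indep G J -> (v, k) \in J -> k != Phi -> colb G (v, k) =1 ladj G v ->
  exists2 u, ladj G v u & (u, Phi) \notin J.
Proof.
move=> indJ vkJ kP colE; apply/exists_inP/contraT.
rewrite negb_exists_in => /forall_inP phiN.
pose c (w : elt V) : 'F_2 := ((w == (v, k)) || (w.2 == Phi) && ladj G v w.1)%:R.
suff : c (v, k) = 0 by rewrite /c eqxx => /eqP; rewrite oner_eq0.
apply: (indJ c _ _ vkJ) => y; rewrite (bigD1 (v, k)) //= {1}/c eqxx mul1r.
rewrite ias_colE colE.
have -> : \sum_(w in J | w != (v, k)) c w * ias_col G w y =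
          \sum_(w in J | w != (v, k)) ((w == (y, Phi)) && ladj G v y)%:R.
  apply: eq_bigr => -[x k'] /andP[_ ne].
  rewrite /c (negbTE ne) ias_colE F2_natr_andb /colb xpair_eqE /=.
  case: k' ne; rewrite !eq_kindE ?andbF //= => _.
  by case: (eqVneq x y) => [->|]; rewrite ?andbT ?andbF.
case vy: (ladj G v y); last by rewrite big1 ?addr0 // => w _; rewrite andbF.
have yJ : (y, Phi) \in J := negbNE (phiN y vy).
rewrite (bigD1 (y, Phi)) /=; last first.
  by rewrite yJ xpair_eqE (eq_sym Phi) (negbTE kP) andbF.
rewrite eqxx big1 => [|w /andP[_ /negbTE ->]] //.
by rewrite addr0 (F2_natr_addb true).
Qed.

Lemma exists_lops_to_phi G J v k :
  subtransversal J -> ias_indep G J -> (v, k) \in J -> k != Phi ->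
  exists s, (induced_map G s (v, k)).2 = Phi /\
    forall w, w \in J -> w.2 = Phi -> (induced_map G s w).2 = Phi.
Proof.
move=> stJ indJ vkJ kP.
have phi_off_v x : (x, Phi) \in J -> x != v.
  move=> xJ; apply: contra_neq kP => xv.
  by case: (subtransversal_eq stJ xJ vkJ xv).
have [kp | kp] := eqVneq k (ns_partner G v).
  exists [:: Lop_ns v]; split=> [|[x []] xJ // _].
    by rewrite induced_map1 kp lop_map_ns_partner.
  by rewrite induced_map1 lop_map_ns_other ?phi_off_v.
have [u vu uJ] := exists_neighbor_phi_free indJ vkJ kP (colb_non_partner kP kp).
have vNu : v != u by apply: contraTneq vu => ->; rewrite ladj_irr'.
exists [:: Lop_ns u; Lop_ns v]; split=> [|[x []] xJ // _].
  have uv_adj : ladj G u v by rewrite ladj_sym'.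
  rewrite induced_map_cons induced_map1 (lop_map_ns_other _ _ vNu).
  by rewrite (ns_partner_graph_ns uv_adj kP kp) lop_map_ns_partner.
have xu : x != u by apply: contraNneq uJ => <-.
rewrite induced_map_cons (lop_map_ns_other _ _ xu) induced_map1.
by rewrite lop_map_ns_other ?phi_off_v.
Qed.

Lemma exists_lops_all_phi n G J :
  subtransversal J -> ias_indep G J -> (#|non_phi J| <= n)%N ->
  exists s, forall w, w \in J -> (induced_map G s w).2 = Phi.
Proof.
elim: n G J => [|n IH] G J stJ indJ le_n.
  by exists [::]; apply/non_phi_eq0/eqP; rewrite -cards_eq0 -leqn0.
have [J_phi | [[v k] vk_bad]] := set_0Vmem (non_phi J).
  by exists [::]; apply: non_phi_eq0.
have /andP[vkJ kP] : ((v, k) \in J) && (k != Phi) by rewrite inE in vk_bad.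
have [s1 [vk_to_phi phi_fixed]] := exists_lops_to_phi stJ indJ vkJ kP.
have lt := card_non_phi_induced_map vk_bad vk_to_phi phi_fixed.
have [s2 all_phi] := IH _ _ (subtransversal_induced_map G s1 stJ)
  (ias_indep_induced_map (s := s1) indJ) (leq_trans lt le_n).
by exists (s1 ++ s2) => w wJ; rewrite induced_map_cat; apply/all_phi/imset_f.
Qed.

End LocalEquivalence.

Theorem proposition4p1 (V : finType) (G : lgraph V) (J : {set elt V}) :
  subtransversal J -> ias_indep G J ->
  exists s : seq (lop V),
    forall w, w \in J -> (induced_map G s w).2 = Phi.
Proof. by move=> stJ indJ; apply: (exists_lops_all_phi stJ indJ (leqnn _)). Qed.
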